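(* Let $\bar{\boldsymbol{W}}^{\star},\bar{\boldsymbol{S}}^{\star}\in\mathbb{C}^{L\times L}$ be an optimal solution of problem (SDR2) defined in the context, and assume $\bar{\boldsymbol{g}}_0^H\bar{\boldsymbol{W}}^{\star}\bar{\boldsymbol{g}}_0>0$. Define $$\bar{\boldsymbol{W}}^{\mathrm{opt}}=\frac{\bar{\boldsymbol{W}}^{\star}\bar{\boldsymbol{g}}_0\bar{\boldsymbol{g}}_0^H\bar{\boldsymbol{W}}^{\star}}{\bar{\boldsymbol{g}}_0^H\bar{\boldsymbol{W}}^{\star}\bar{\boldsymbol{g}}_0},\qquad \bar{\boldsymbol{S}}^{\mathrm{opt}}=\bar{\boldsymbol{W}}^{\star}+\bar{\boldsymbol{S}}^{\star}-\bar{\boldsymbol{W}}^{\mathrm{opt}}.$$ Then $\mathrm{rank}(\bar{\boldsymbol{W}}^{\mathrm{opt}})=1$, the pair $(\bar{\boldsymbol{W}}^{\mathrm{opt}},\bar{\boldsymbol{S}}^{\mathrm{opt}})$ is feasible for (P2) (in particular $\bar{\boldsymbol{S}}^{\mathrm{opt}}\succeq\boldsymbol{0}$), and $R(\bar{\boldsymbol{W}}^{\mathrm{opt}},\bar{\boldsymbol{S}}^{\mathrm{opt}})=R(\bar{\boldsymbol{W}}^{\star},\bar{\boldsymbol{S}}^{\star})$. Consequently the optimal values of (SDR2) and (P2) coincide and $(\bar{\boldsymbol{W}}^{\mathrm{opt}},\bar{\boldsymbol{S}}^{\mathrm{opt}})$ is an optimal solution of (P2).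
   Context: Fix integers $N\ge L\ge1$, $K\ge1$, a matrix $\boldsymbol{U}\in\mathbb{C}^{N\times L}$ with orthonormal columns, vectors $\bar{\boldsymbol{g}}_0,\bar{\boldsymbol{g}}_1,\dots,\bar{\boldsymbol{g}}_{K+1}\in\mathbb{C}^{L}$, noise powers $\sigma_0^2,\sigma_1^2,\dots,\sigma_{K+1}^2>0$, $\sigma_s^2>0$, a complex number $\beta_s\neq0$, an integer $T\ge1$, thresholds $\Gamma_\theta,\Gamma_r>0$, $Q\ge0$, $P>0$, and $0<\zeta\le1$. Let $\mathcal{K}_{\mathrm{ER}}=\{1,\dots,K\}$ and $\mathcal{K}_{\mathrm{EAV}}=\{1,\dots,K+1\}$. Let $\boldsymbol{A},\dot{\boldsymbol{A}}_\theta,\dot{\boldsymbol{A}}_r\in\mathbb{C}^{N\times N}$ be given matrices (in the paper, $\boldsymbol{A}=\boldsymbol{a}\boldsymbol{a}^T$ for the near-field steering vector $\boldsymbol{a}$ of the target and $\dot{\boldsymbol{A}}_\theta,\dot{\boldsymbol{A}}_r$ its partial derivatives with respect to target angle and range). For Hermitian $\bar{\boldsymbol{W}},\bar{\boldsymbol{S}}\in\mathbb{C}^{L\times L}$ set $\boldsymbol{R}_x=\boldsymbol{U}(\bar{\boldsymbol{W}}+\bar{\boldsymbol{S}})\boldsymbol{U}^H$ and, for $\dot{\boldsymbol{A}}\in\{\dot{\boldsymbol{A}}_\theta,\dot{\boldsymbol{A}}_r\}$, $$\mathrm{CRB}_{\dot{\boldsymbol{A}}}(\bar{\boldsymbol{W}},\bar{\boldsymbol{S}})=\frac{\sigma_s^2}{2|\beta_s|^2T}\cdot\frac{\mathrm{tr}(\boldsymbol{A}\boldsymbol{R}_x\boldsymbol{A}^H)}{\mathrm{tr}(\dot{\boldsymbol{A}}\boldsymbol{R}_x\dot{\boldsymbol{A}}^H)\,\mathrm{tr}(\boldsymbol{A}\boldsymbol{R}_x\boldsymbol{A}^H)-|\mathrm{tr}(\boldsymbol{A}\boldsymbol{R}_x\dot{\boldsymbol{A}}^H)|^2}$$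 (the CRBs for angle and range are $\mathrm{CRB}_{\dot{\boldsymbol{A}}_\theta}$ and $\mathrm{CRB}_{\dot{\boldsymbol{A}}_r}$). Define the SINRs $\gamma_k(\bar{\boldsymbol{W}},\bar{\boldsymbol{S}})=\dfrac{\bar{\boldsymbol{g}}_k^H\bar{\boldsymbol{W}}\bar{\boldsymbol{g}}_k}{\bar{\boldsymbol{g}}_k^H\bar{\boldsymbol{S}}\bar{\boldsymbol{g}}_k+\sigma_k^2}$ for $k=0,1,\dots,K+1$, and the secrecy rate $$R(\bar{\boldsymbol{W}},\bar{\boldsymbol{S}})=\min_{k\in\mathcal{K}_{\mathrm{EAV}}}\Big(\log_2(1+\gamma_0(\bar{\boldsymbol{W}},\bar{\boldsymbol{S}}))-\log_2(1+\gamma_k(\bar{\boldsymbol{W}},\bar{\boldsymbol{S}}))\Big)^+,$$ where $(x)^+=\max(x,0)$. Problem (P2) is: maximize $R(\bar{\boldsymbol{W}},\bar{\boldsymbol{S}})$ over Hermitian $\bar{\boldsymbol{W}},\bar{\boldsymbol{S}}\in\mathbb{C}^{L\times L}$ subject to (i) $\mathrm{CRB}_{\dot{\boldsymbol{A}}_\theta}(\bar{\boldsymbol{W}},\bar{\boldsymbol{S}})\le\Gamma_\theta$ and $\mathrm{CRB}_{\dot{\boldsymbol{A}}_r}(\bar{\boldsymbol{W}},\bar{\boldsymbol{S}})\le\Gamma_r$ (with the denominators required to be positive); (ii) $\zeta\bar{\boldsymbol{g}}_k^H(\bar{\boldsymbol{W}}+\bar{\boldsymbol{S}})\bar{\boldsymbol{g}}_k\ge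 Q$ for all $k\in\mathcal{K}_{\mathrm{ER}}$; (iii) $\mathrm{Tr}(\bar{\boldsymbol{W}}+\bar{\boldsymbol{S}})\le P$; (iv) $\bar{\boldsymbol{W}}\succeq\boldsymbol{0}$, $\bar{\boldsymbol{S}}\succeq\boldsymbol{0}$; (v) $\mathrm{rank}(\bar{\boldsymbol{W}})\le1$. Problem (SDR2) is the same problem with constraint (v) removed. *)

From HB Require Import structures.
From mathcomp Require Import all_boot all_order all_algebra.
From mathcomp Require Import complex.
From mathcomp Require Import reals exp.
Set Implicit Arguments. Unset Strict Implicit. Unset Printing Implicit Defensive.
Import Order.TTheory GRing.Theory Num.Theory.
Local Open Scope ring_scope.
Local Open Scope complex_scope.

Section Defs.
Variable R : realType.
Local Notation C := R[i].

Definition adjm m n (M : 'M[C]_(m, n)) : 'M[C]_(n, m) := (map_mx conjc M)^T.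

Definition hermitian n (M : 'M[C]_n) : Prop := adjm M = M.

(* positive semidefinite (M ⪰ 0): Hermitian with x^H M x >= 0 for all x
   (order of C: 0 <= z means z is real and nonnegative) *)
Definition psd n (M : 'M[C]_n) : Prop :=
  hermitian M /\ forall x : 'cV[C]_n, 0 <= (adjm x *m M *m x) 0 0.

Definition qf n (g : 'cV[C]_n) (M : 'M[C]_n) : C := (adjm g *m M *m g) 0 0.

Definition log2 (x : R) : R := ln x / ln 2.

Definition posp (x : R) : R := Num.max x 0.

(* SINR gamma_k(W,S) (real-valued; numerator/denominator are real for
   Hermitian W,S, we take real parts) *)
Definition sinr L (g : 'cV[C]_L) (sigma : R) (W S : 'M[C]_L) : R :=
  complex.Re (qf g W) / (complex.Re (qf g S) + sigma ^+ 2).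

(* secrecy rate: min over k in K_EAV = {1,..,K+1} of
   (log2(1+gamma_0) - log2(1+gamma_k))^+ ; indices 0..K+1 are 'I_(K.+2) *)
Definition secrecy_rate L K (g : 'I_K.+2 -> 'cV[C]_L) (sigma : 'I_K.+2 -> R)
    (W S : 'M[C]_L) : R :=
  let e k := posp (log2 (1 + sinr (g ord0) (sigma ord0) W S)
                   - log2 (1 + sinr (g k) (sigma k) W S)) in
  \big[Num.min/e ord_max]_(k < K.+2 | k != ord0) e k.

Definition Rx N L (U : 'M[C]_(N, L)) (W S : 'M[C]_L) : 'M[C]_N :=
  U *m (W + S) *m adjm U.

Definition crb_den N (A Ad Rxm : 'M[C]_N) : R :=
  complex.Re (\tr (Ad *m Rxm *m adjm Ad)) * complex.Re (\tr (A *m Rxm *m adjm A))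
  - ComplexField.Normc.normc (\tr (A *m Rxm *m adjm Ad)) ^+ 2.

Definition crb N (sigs : R) (beta : C) (T : nat) (A Ad Rxm : 'M[C]_N) : R :=
  sigs ^+ 2 / (2 * ComplexField.Normc.normc beta ^+ 2 * T%:R)
  * (complex.Re (\tr (A *m Rxm *m adjm A)) / crb_den A Ad Rxm).

Definition feasible_SDR2 N L K (U : 'M[C]_(N, L)) (g : 'I_K.+2 -> 'cV[C]_L)
    (sigs : R) (beta : C) (T : nat) (A Adth Adr : 'M[C]_N)
    (Gth Gr Q P zeta : R) (W S : 'M[C]_L) : Prop :=
  [/\ hermitian W /\ hermitian S,
      (0 < crb_den A Adth (Rx U W S) /\ crb sigs beta T A Adth (Rx U W S) <= Gth)
      /\ (0 < crb_den A Adr (Rx U W S) /\ crb sigs beta T A Adr (Rx U W S) <= Gr),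
      (forall k : 'I_K.+2, (1 <= k <= K)%N -> Q <= zeta * complex.Re (qf (g k) (W + S))),
      complex.Re (\tr (W + S)) <= P &
      psd W /\ psd S].

Definition feasible_P2 N L K (U : 'M[C]_(N, L)) (g : 'I_K.+2 -> 'cV[C]_L)
    (sigs : R) (beta : C) (T : nat) (A Adth Adr : 'M[C]_N)
    (Gth Gr Q P zeta : R) (W S : 'M[C]_L) : Prop :=
  feasible_SDR2 U g sigs beta T A Adth Adr Gth Gr Q P zeta W S /\ (\rank W <= 1)%N.

End Defs.

(** Once the part of [Ws] seen by the legitimate user is split off, the SDR
    optimum is of rank-one type: [Wopt = Ws g0 g0^H Ws / (g0^H Ws g0)] is the
    projection of [Ws] onto the direction [Ws g0].  Cauchy–Schwarz for the
    form [x^H Ws y] gives [x^H Wopt x <= x^H Ws x] with equality at [x = g0],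
    so [Ws - Wopt] is PSD and so is [Sopt = (Ws - Wopt) + Ss].  Since
    [Wopt + Sopt = Ws + Ss], every constraint involving only the total
    covariance (CRBs, energy harvesting, power) still holds.  The user's SINR
    is unchanged while each eavesdropper's SINR can only drop, because signal
    power moves into artificial noise; so the secrecy rate does not decrease,
    and by optimality of [(Ws, Ss)] it is equal. *)
From Pilot Require Import Defs.
From HB Require Import structures.
From mathcomp Require Import all_boot all_order all_algebra.
From mathcomp Require Import complex.
From mathcomp Require Import reals exp.
From mathcomp Require Import ring lra.
Set Implicit Arguments. Unset Strict Implicit. Unset Printing Implicit Defensive.
Import Order.TTheory GRing.Theory Num.Theory.
Local Open Scope ring_scope.
Local Open Scope complex_scope.

Section HermitianForms.
Variable R : realType.
Local Notation C := R[i].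

Lemma adjmM m n p (A : 'M[C]_(m, n)) (B : 'M[C]_(n, p)) :
  adjm (A *m B) = adjm B *m adjm A.
Proof. by rewrite /adjm map_mxM trmx_mul. Qed.

Lemma adjmD m n (A B : 'M[C]_(m, n)) : adjm (A + B) = adjm A + adjm B.
Proof. by rewrite /adjm map_mxD linearD. Qed.

Lemma adjmB m n (A B : 'M[C]_(m, n)) : adjm (A - B) = adjm A - adjm B.
Proof. by rewrite /adjm map_mxB linearB. Qed.

Lemma adjmZ m n a (A : 'M[C]_(m, n)) : adjm (a *: A) = conjc a *: adjm A.
Proof. by rewrite /adjm map_mxZ linearZ. Qed.

Lemma adjmK m n (A : 'M[C]_(m, n)) : adjm (adjm A) = A.
Proof. by apply/matrixP=> i j; rewrite /adjm !mxE conjcK. Qed.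

Lemma adjm_mx11 (A : 'M[C]_1) : adjm A 0 0 = conjc (A 0 0).
Proof. by rewrite /adjm !mxE. Qed.

Lemma ge0_conjc (x : C) : 0 <= x -> conjc x = x.
Proof. by case: x => a b; rewrite lecE /= => /andP[/eqP -> _]; rewrite oppr0. Qed.

Lemma hermitianD n (M1 M2 : 'M[C]_n) :
  Defs.hermitian M1 -> Defs.hermitian M2 -> Defs.hermitian (M1 + M2).
Proof. by rewrite /Defs.hermitian adjmD => -> ->. Qed.

Lemma hermitianB n (M1 M2 : 'M[C]_n) :
  Defs.hermitian M1 -> Defs.hermitian M2 -> Defs.hermitian (M1 - M2).
Proof. by rewrite /Defs.hermitian adjmB => -> ->. Qed.

Variable n : nat.
Implicit Types (M : 'M[C]_n) (x y z : 'cV[C]_n).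

Definition sform M x y : C := (adjm x *m M *m y) 0 0.

Lemma qfE (g : 'cV[C]_n) M : qf g M = sform M g g.
Proof. by []. Qed.

Lemma sformBr M x y z : sform M x (y - z) = sform M x y - sform M x z.
Proof.
by rewrite /sform mulmxBr !mxE -sumrB; apply: eq_bigr => i _; rewrite mxE.
Qed.

Lemma sformZr M x a y : sform M x (a *: y) = a * sform M x y.
Proof. by rewrite /sform -scalemxAr mxE. Qed.

Lemma sformBl M x y z : sform M (y - z) x = sform M y x - sform M z x.
Proof. by rewrite /sform adjmB !mulmxBl mxE [X in _ + X]mxE. Qed.

Lemma sformZl M x a y : sform M (a *: y) x = conjc a * sform M y x.
Proof. by rewrite /sform adjmZ -!scalemxAl mxE. Qed.

Lemma sformDm M1 M2 x y : sform (M1 + M2) x y = sform M1 x y + sform M2 x y.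
Proof. by rewrite /sform mulmxDr mulmxDl mxE. Qed.

Lemma sformBm M1 M2 x y : sform (M1 - M2) x y = sform M1 x y - sform M2 x y.
Proof. by rewrite /sform mulmxBr mulmxBl mxE [X in _ + X]mxE. Qed.

Lemma sformC M x y : Defs.hermitian M -> conjc (sform M x y) = sform M y x.
Proof. by move=> hM; rewrite /sform -adjm_mx11 !adjmM adjmK hM mulmxA. Qed.

Lemma psdD M1 M2 : psd M1 -> psd M2 -> psd (M1 + M2).
Proof.
move=> [h1 p1] [h2 p2]; split; first exact: hermitianD.
by move=> x; rewrite -/(sform _ x x) sformDm addr_ge0 ?p1 ?p2.
Qed.

(* Expand [0 <= sform M v v] at [v = sform M g g *: x - sform M g x *: g]. *)
Lemma psd_cauchy_schwarz M x g : psd M -> 0 < sform M g g ->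
  sform M g x * conjc (sform M g x) <= sform M g g * sform M x x.
Proof.
move=> [hM pM] gpos.
have := pM (sform M g g *: x - sform M g x *: g).
rewrite -/(sform _ _ _) sformBl !sformBr !sformZl !sformZr.
rewrite (ge0_conjc (ltW gpos)) (sformC _ _ hM).
set a := sform M g g; set b := sform M g x; set c := sform M x x.
have -> : a * (a * c) - a * (b * sform M x g) - (sform M x g * (a * b) -
    sform M x g * (b * a)) = a * (a * c - b * sform M x g) by ring.
by rewrite pmulr_rge0 // subr_ge0.
Qed.

End HermitianForms.

Section RankOneExtraction.
Variables (R : realType) (n : nat) (W : 'M[R[i]]_n) (h : 'cV[R[i]]_n).
Hypotheses (hermW : Defs.hermitian W) (hW_pos : 0 < sform W h h).

Definition rank_one_part : 'M[R[i]]_n :=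
  (sform W h h)^-1 *: (W *m h *m adjm h *m W).

Lemma sform_rank_one_part x y :
  sform rank_one_part x y = (sform W h h)^-1 * (sform W x h * sform W h y).
Proof.
rewrite /sform /rank_one_part -scalemxAr -scalemxAl mxE; congr (_ * _).
have -> : adjm x *m (W *m h *m adjm h *m W) *m y =
    (adjm x *m W *m h) *m (adjm h *m W *m y) by rewrite !mulmxA.
by rewrite mxE big_ord1.
Qed.

Lemma hermitian_rank_one_part : Defs.hermitian rank_one_part.
Proof.
rewrite /Defs.hermitian /rank_one_part adjmZ !adjmM adjmK hermW conjc_inv.
by rewrite (ge0_conjc (ltW hW_pos)) !mulmxA.
Qed.

Lemma sform_rank_one_part_at : sform rank_one_part h h = sform W h h.
Proof. by rewrite sform_rank_one_part mulrA mulVf ?mul1r // gt_eqF. Qed.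

Lemma sform_rank_one_part_bounds x : psd W ->
  0 <= sform rank_one_part x x <= sform W x x.
Proof.
move=> psdW; rewrite sform_rank_one_part -(sformC h x hermW); apply/andP; split.
  by apply: mulr_ge0; [rewrite invr_ge0 ltW | rewrite mulrC mulcJ_ge0].
by rewrite ler_pdivrMl // mulrC psd_cauchy_schwarz.
Qed.

Lemma psd_rank_one_part : psd W -> psd rank_one_part.
Proof.
move=> psdW; split; first exact: hermitian_rank_one_part.
by move=> x; have /andP[] := sform_rank_one_part_bounds x psdW.
Qed.

Lemma psd_sub_rank_one_part : psd W -> psd (W - rank_one_part).
Proof.
move=> psdW; split; first by apply: hermitianB hermW hermitian_rank_one_part.
move=> x; rewrite -/(sform _ x x) sformBm subr_ge0.
by have /andP[] := sform_rank_one_part_bounds x psdW.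
Qed.

Lemma rank_rank_one_part : \rank rank_one_part = 1%N.
Proof.
apply/eqP; rewrite eqn_leq; apply/andP; split.
  apply: leq_trans (mxrankS _) _; first exact: scalemx_sub.
  rewrite -!mulmxA mulmxA.
  exact: leq_trans (mxrankM_maxl _ _) (rank_leq_col _).
rewrite lt0n mxrank_eq0; apply/eqP => rank1_eq0.
move: hW_pos; rewrite -sform_rank_one_part_at rank1_eq0.
by rewrite /sform mulmx0 mul0mx mxE ltxx.
Qed.

End RankOneExtraction.

Section SecrecyRate.
Variable R : realType.
Local Notation C := R[i].

Lemma ler_Re (x y : C) : x <= y -> complex.Re x <= complex.Re y.
Proof. by rewrite lecE => /andP[]. Qed.

Lemma ler_log2 (x y : R) : 0 < x -> x <= y -> log2 x <= log2 y.
Proof.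
move=> x_gt0 le_xy; rewrite /log2 ler_wpM2r //.
  by rewrite invr_ge0 ltW // ln_gt0 // ltr1n.
by rewrite ler_ln ?posrE // (lt_le_trans x_gt0 le_xy).
Qed.

(* Moving the power [a - a'] from the signal into the interference. *)
Lemma ler_div_shift (a a' s d : R) : 0 <= a' -> a' <= a -> 0 <= s -> 0 < d ->
  a' / (a + s - a' + d) <= a / (s + d).
Proof.
move=> a'_ge0 le_a'a s_ge0 d_gt0.
have sd_gt0 : 0 < s + d by rewrite ltr_wpDl.
have le_den : s + d <= a + s - a' + d by lra.
apply: (@le_trans _ _ (a' / (s + d))).
  by rewrite ler_wpM2l // lef_pV2 ?posrE // (lt_le_trans sd_gt0 le_den).
by rewrite ler_wpM2r // invr_ge0 ltW.
Qed.

Variables (L : nat) (g : 'cV[C]_L) (sigma : R) (W S W' S' : 'M[C]_L).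
Hypotheses (sigma_gt0 : 0 < sigma) (sum_eq : W' + S' = W + S).

Let S'E : S' = W + S - W'.
Proof. by rewrite -sum_eq addrC addKr. Qed.

Lemma sinr_eq_sum : qf g W' = qf g W -> sinr g sigma W' S' = sinr g sigma W S.
Proof.
move=> eq_sig; rewrite /sinr S'E !qfE sformBm sformDm -!qfE eq_sig.
by rewrite addrAC subrr add0r.
Qed.

Lemma sinr_le_sum : 0 <= qf g W' <= qf g W -> 0 <= qf g S ->
  0 <= sinr g sigma W' S' <= sinr g sigma W S.
Proof.
move=> /andP[sig'_ge0 le_sig] noise_ge0.
have d_gt0 : 0 < sigma ^+ 2 by rewrite exprn_gt0.
have := ler_Re sig'_ge0; have := ler_Re le_sig; have := ler_Re noise_ge0.
rewrite /sinr S'E !qfE sformBm sformDm !raddfB raddfD -!qfE /=.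
move=> noise_ge0' le_sig' sig'_ge0'; apply/andP; split.
  by rewrite divr_ge0 //; lra.
exact: ler_div_shift.
Qed.

End SecrecyRate.

Lemma secrecy_rate_mono (R : realType) L K (g : 'I_K.+2 -> 'cV[R[i]]_L)
    (sigma : 'I_K.+2 -> R) (W S W' S' : 'M[R[i]]_L) :
  sinr (g ord0) (sigma ord0) W' S' = sinr (g ord0) (sigma ord0) W S ->
  (forall k, 0 <= sinr (g k) (sigma k) W' S' <= sinr (g k) (sigma k) W S) ->
  secrecy_rate g sigma W S <= secrecy_rate g sigma W' S'.
Proof.
move=> eq_user le_eve; rewrite /secrecy_rate eq_user.
set u := sinr (g ord0) (sigma ord0) W S.
have le_term k : posp (log2 (1 + u) - log2 (1 + sinr (g k) (sigma k) W S)) <=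
    posp (log2 (1 + u) - log2 (1 + sinr (g k) (sigma k) W' S')).
  have /andP[sinr'_ge0 le_sinr] := le_eve k.
  apply: le_max2 (lexx 0); apply: lerB (lexx _) _.
  by rewrite ler_log2 ?lerD2l // ltr_wpDr.
apply: (big_ind2 (fun x y => x <= y)) => [|x1 x2 y1 y2|k _];
  [exact: le_term | exact: le_min2 | exact: le_term].
Qed.

Lemma feasible_SDR2_sum (R : realType) N L K (U : 'M[R[i]]_(N, L))
    (g : 'I_K.+2 -> 'cV[R[i]]_L) sigs beta T (A Adth Adr : 'M[R[i]]_N)
    Gth Gr Q P zeta (W S W' S' : 'M[R[i]]_L) :
  W' + S' = W + S -> psd W' -> psd S' ->
  feasible_SDR2 U g sigs beta T A Adth Adr Gth Gr Q P zeta W S ->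
  feasible_SDR2 U g sigs beta T A Adth Adr Gth Gr Q P zeta W' S'.
Proof.
move=> sum_eq psdW' psdS' [_ crb_ok eh_ok pow_ok _].
split.
- by split; [case: psdW' | case: psdS'].
- by rewrite /Rx sum_eq.
- by rewrite sum_eq.
- by rewrite sum_eq.
- by split.
Qed.

Theorem proposition1 (R : realType) (N L K T : nat)
    (U : 'M[R[i]]_(N, L)) (g : 'I_K.+2 -> 'cV[R[i]]_L) (sigma : 'I_K.+2 -> R)
    (sigs : R) (beta : R[i]) (A Adth Adr : 'M[R[i]]_N)
    (Gth Gr Q P zeta : R) (Ws Ss : 'M[R[i]]_L) :
  (1 <= L)%N -> (L <= N)%N -> (1 <= K)%N -> (1 <= T)%N ->
  adjm U *m U = 1%:M ->
  (forall k, 0 < sigma k) -> 0 < sigs -> beta != 0 ->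
  0 < Gth -> 0 < Gr -> 0 <= Q -> 0 < P -> 0 < zeta -> zeta <= 1 ->
  (* (Ws, Ss) is an optimal solution of (SDR2) *)
  feasible_SDR2 U g sigs beta T A Adth Adr Gth Gr Q P zeta Ws Ss ->
  (forall W S : 'M[R[i]]_L,
      feasible_SDR2 U g sigs beta T A Adth Adr Gth Gr Q P zeta W S ->
      secrecy_rate g sigma W S <= secrecy_rate g sigma Ws Ss) ->
  0 < qf (g ord0) Ws ->
  let Wopt := (qf (g ord0) Ws)^-1 *: (Ws *m g ord0 *m adjm (g ord0) *m Ws) in
  let Sopt := Ws + Ss - Wopt in
  [/\ \rank Wopt = 1%N,
      feasible_P2 U g sigs beta T A Adth Adr Gth Gr Q P zeta Wopt Sopt,
      psd Sopt,
      secrecy_rate g sigma Wopt Sopt = secrecy_rate g sigma Ws Ss &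
      (forall W S : 'M[R[i]]_L,
          feasible_SDR2 U g sigs beta T A Adth Adr Gth Gr Q P zeta W S ->
          secrecy_rate g sigma W S <= secrecy_rate g sigma Wopt Sopt) /\
      (forall W S : 'M[R[i]]_L,
          feasible_P2 U g sigs beta T A Adth Adr Gth Gr Q P zeta W S ->
          secrecy_rate g sigma W S <= secrecy_rate g sigma Wopt Sopt)].
Proof.
move=> _ _ _ _ _ sigma_gt0 _ _ _ _ _ _ _ _ feas opt user_pos Wopt Sopt.
have [[hermW _] _ _ _ [psdW psdS]] := feas.
have rankWopt : \rank Wopt = 1%N by exact: rank_rank_one_part.
have psdWopt : psd Wopt by exact: psd_rank_one_part.
have psdSopt : psd Sopt.
  by rewrite /Sopt addrAC; apply: psdD psdS; exact: psd_sub_rank_one_part.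
have sum_eq : Wopt + Sopt = Ws + Ss by rewrite /Sopt addrC subrK.
have feasOpt := feasible_SDR2_sum sum_eq psdWopt psdSopt feas.
have rate_ge : secrecy_rate g sigma Ws Ss <= secrecy_rate g sigma Wopt Sopt.
  apply: secrecy_rate_mono => [|k].
    exact: sinr_eq_sum _ sum_eq (sform_rank_one_part_at user_pos).
  apply: sinr_le_sum (sigma_gt0 k) sum_eq _ (psdS.2 _).
  exact: sform_rank_one_part_bounds hermW user_pos _ psdW.
have rate_eq : secrecy_rate g sigma Wopt Sopt = secrecy_rate g sigma Ws Ss.
  by apply/le_anti/andP; split; [exact: opt feasOpt | exact: rate_ge].
split.
- exact: rankWopt.
- by split; last rewrite rankWopt.
- exact: psdSopt.
- exact: rate_eq.
- by split=> [W S|W S []] feasWS *; rewrite rate_eq; exact: opt.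
Qed.
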